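(* Let $C\subseteq\{0,1\}^n$ with $|C|\leq 2^{\frac{1}{64}n}$, let $\epsilon<1/8$, and let $J\subseteq[n]$ with $|J|\leq n/2$. Then a random $X\sim U_J(C)$ is $\epsilon$-far from $C$ with probability $1-o(1)$ (as $n\to\infty$). Furthermore, this remains true when conditioned on any value of $X[J]$.
   Context: $[n]=\{1,\dots,n\}$. For $x\in\{0,1\}^n$ and $J\subseteq[n]$, $x[J]=(x_j)_{j\in J}$. $U(C)$ denotes the uniform distribution on $C$, and $U_J(C)$ denotes the distribution obtained by drawing $x\sim U(C)$ and then replacing $x[[n]\setminus J]$ by a uniformly random vector in $\{0,1\}^{n-|J|}$, independent of everything else. Distance is normalized Hamming distance $d(x,y)=|\{i:x_i\neq y_i\}|/n$, $d(x,C)=\min_{c\in C}d(x,c)$, and $x$ is $\epsilon$-far from $C$ if $d(x,C)>\epsilon$. *)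

From mathcomp Require Import all_boot all_order all_algebra.
From mathcomp Require Import all_classical all_reals.
From mathcomp Require Import topology normedtype sequences exp.
Set Implicit Arguments. Unset Strict Implicit. Unset Printing Implicit Defensive.
Import Order.TTheory GRing.Theory Num.Theory.
Local Open Scope ring_scope.

Definition word (n : nat) := {ffun 'I_n -> bool}.

Definition ham (n : nat) (x y : word n) : nat := #|[set i | x i != y i]|.

Definition dist (R : realType) (n : nat) (x y : word n) : R :=
  (ham x y)%:R / n%:R.

(* d(x,C) = min_{c in C} d(x,c)  (for nonempty C; default n is never smaller
   than any ham value, so it does not affect the minimum) *)
Definition distC (R : realType) (n : nat) (x : word n) (C : {set word n}) : R :=
  (\big[minn/n]_(c in C) ham x c)%N%:R / n%:R.

Definition far (R : realType) (n : nat) (eps : R) (x : word n) (C : {set word n}) : bool :=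
  (eps < distC R x C)%R.

Definition agree_on (n : nat) (J : {set 'I_n}) (x y : word n) : bool :=
  [forall j in J, x j == y j].

(* Sample space of U_J(C): a uniformly random pair (c, X) with c in C and
   X a vector with X[J] = c[J] (the coordinates outside J of X being uniform,
   independent of c).  The map (c, r) |-> (c, X) with X[J] = c[J],
   X[[n]\J] = r is a bijection C x {0,1}^{n-|J|} -> UJ_space C J, so the
   second component of a uniform element of UJ_space C J is distributed
   exactly as U_J(C). *)
Definition UJ_space (n : nat) (C : {set word n}) (J : {set 'I_n})
  : {set word n * word n} :=
  [set p | (p.1 \in C) && agree_on J p.1 p.2].

Definition UJ_prob (R : realType) (n : nat) (C : {set word n}) (J : {set 'I_n})
  (E : word n -> bool) : R :=
  #|[set p in UJ_space C J | E p.2]|%:R / #|UJ_space C J|%:R.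

Definition UJ_cprob (R : realType) (n : nat) (C : {set word n}) (J : {set 'I_n})
  (v : word n) (E : word n -> bool) : R :=
  #|[set p in UJ_space C J | E p.2 && agree_on J p.2 v]|%:R /
  #|[set p in UJ_space C J | agree_on J p.2 v]|%:R.

(* Conditioned on the codeword c0 it is generated from, X is uniform on the
   subcube of words agreeing with c0 on J, of dimension m = |[n] \ J| >= n/2.
   Weighting each point X of the subcube by 2^(number of agreements with c
   outside J) gives total weight 3^m, and every X within distance n/8 of c has
   weight at least 2^(m - n/8).  Hence each Hamming ball of radius n/8 meets
   the subcube in at most 2^(n/8) (3/2)^m points, and a union bound over
   |C| <= 2^(n/64) centres shows that the fraction of subcube points close to C
   is at most 2^(n/8 + n/64) (3/4)^(n/2) <= (31/32)^n.  The bound holds on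
   every such subcube, hence on any union of them, and both the unconditional
   and the conditional sample spaces are such unions. *)

From mathcomp Require Import all_boot all_order all_algebra.
From mathcomp Require Import all_classical all_reals.
From mathcomp Require Import topology normedtype sequences exp.
From mathcomp Require Import ring lra zify.
Import Order.TTheory GRing.Theory Num.Theory.

Set Implicit Arguments.
Unset Strict Implicit.
Unset Printing Implicit Defensive.

Section SubcubeBalls.
Variables (n : nat) (J : {set 'I_n}).
Local Notation m := #|~: J|.

Definition fiber (c : word n) : {set word n} := [set X | agree_on J c X].

Definition agree_out (X c : word n) : nat := #|~: J :&: [set i | X i == c i]|.

Lemma sum_fiber_prod (c0 : word n) (g : 'I_n -> bool -> nat) :
  \sum_(X in fiber c0) \prod_(i in ~: J) g i (X i) =
  \prod_(i in ~: J) (g i true + g i false).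
Proof.
(* On J the factor is the indicator of the bit of c0, so expanding the full
   product by distributivity keeps exactly the words of the fiber. *)
pose w i b := if i \in J then nat_of_bool (c0 i == b) else g i b.
have -> : \prod_(i in ~: J) (g i true + g i false) = \prod_i \sum_(b : bool) w i b.
  rewrite [RHS](bigID (fun i => i \in J)) /= [X in _ = X * _]big1 ?mul1n.
    apply: eq_big => [i|i]; first by rewrite inE.
    by rewrite inE => /negbTE iJ; rewrite big_bool /w iJ.
  by move=> i iJ; rewrite big_bool /w iJ; case: (c0 i).
rewrite bigA_distr_bigA /= [LHS]big_mkcond /=; apply: eq_bigr => X _.
rewrite [RHS](bigID (fun i => i \in J)) /=.
rewrite [Y in _ = _ * Y](eq_big (fun i => i \in ~: J) (fun i => g i (X i))); first last.
- by move=> i /negbTE iJ; rewrite /w iJ.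
- by move=> i; rewrite inE.
rewrite inE; case: (boolP (agree_on J c0 X)) => [/forallP agr | /forallPn [j]].
  rewrite [Y in _ = Y * _]big1 ?mul1n // => i iJ; rewrite /w iJ.
  by have := agr i; rewrite iJ /= => ->.
by rewrite negb_imply => /andP [jJ /negbTE neq]; rewrite (bigD1 j) //= {1}/w jJ neq.
Qed.

Lemma card_fiber (c0 : word n) : #|fiber c0| = 2 ^ m.
Proof.
have := sum_fiber_prod c0 (fun _ _ => 1).
rewrite (eq_bigr (fun _ => 1)) ?sum1_card => [->|X _]; last by rewrite big1.
by rewrite prod_nat_const.
Qed.

Lemma sum_fiber_exp_agree_out (c0 c : word n) :
  \sum_(X in fiber c0) 2 ^ agree_out X c = 3 ^ m.
Proof.
rewrite -prod_nat_const (eq_bigr (fun i => 2 ^ (true == c i) + 2 ^ (false == c i)));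
  last by move=> i _; case: (c i).
rewrite -(sum_fiber_prod c0 (fun i b => 2 ^ (b == c i))); apply: eq_bigr => X _.
rewrite -expn_sum; congr (2 ^ _).
rewrite /agree_out -sum1_card big_mkcond [RHS]big_mkcond /=.
by apply: eq_bigr => i _; rewrite !inE eq_sym; case: (i \in J); case: (c i == X i).
Qed.

Lemma card_compl_le_agree_out_ham (X c : word n) : m <= agree_out X c + ham X c.
Proof.
rewrite -(cardsID [set i | X i == c i] (~: J)) leq_add2l.
by apply/subset_leq_card/fintype.subsetP => i; rewrite !inE => /andP[].
Qed.

Lemma card_fiber_ball (c0 c : word n) (K : nat) :
  #|[set X in fiber c0 | ham X c <= K]| * 2 ^ m <= 2 ^ K * 3 ^ m.
Proof.
rewrite -sum_nat_cond_const -(sum_fiber_exp_agree_out c0 c) big_distrr /=.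
rewrite [X in _ <= X](bigID (fun X => ham X c <= K)) /=.
apply: leq_trans (leq_addr _ _); apply: leq_sum => X /andP[_ close].
rewrite -expnD leq_pexp2l // addnC.
by apply: leq_trans (card_compl_le_agree_out_ham X c) _; rewrite leq_add2l.
Qed.

Lemma card_fiber_near (c0 : word n) (C : {set word n}) (K : nat) :
  #|[set X in fiber c0 | [exists c in C, ham X c <= K]]| * 2 ^ m
    <= 2 ^ K * (#|C| * 3 ^ m).
Proof.
have -> : [set X in fiber c0 | [exists c in C, ham X c <= K]] =
          \bigcup_(c in C) [set X in fiber c0 | ham X c <= K].
  apply/setP => X; rewrite !inE.
  apply/andP/bigcupP => [[fX /existsP[c /andP[cC close]]]|[c cC]].
    by exists c; rewrite // !inE fX.
  by rewrite !inE => /andP[fX close]; split; last by apply/existsP; exists c; rewrite cC.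
have union_bound (B : word n -> {set word n}) :
    #|\bigcup_(c in C) B c| <= \sum_(c in C) #|B c|.
  elim/big_ind2: _ => [|? A ? B' le_A le_B'|//]; first by rewrite cards0.
  exact: leq_trans (leq_card_setU _ _) (leq_add le_A le_B').
rewrite mulnCA -[X in _ <= X]sum_nat_const.
apply: leq_trans (leq_mul (union_bound _) (leqnn _)) _.
by rewrite big_distrl /=; apply: leq_sum => c _; apply: card_fiber_ball.
Qed.

End SubcubeBalls.

Lemma agree_on_eq_trans (n : nat) (J : {set 'I_n}) (x y z : word n) :
  agree_on J x y -> agree_on J y z = agree_on J x z.
Proof.
move=> /forallP xy; apply/forallP/forallP => yz j; apply/implyP => jJ;
  have := xy j; have := yz j; rewrite jJ /= => /eqP-> /eqP-> //.
Qed.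

Lemma card_pairs_by_sections (T1 T2 : finType) (P : {set T1 * T2}) :
  #|P| = \sum_a #|[set b | (a, b) \in P]|.
Proof.
rewrite (eq_bigr (fun a => \sum_b ((a, b) \in P : nat))) => [|a _]; last first.
  by rewrite -sum1_card big_mkcond; apply: eq_bigr => b _; rewrite inE.
by rewrite pair_bigA -sum1_card big_mkcond; apply: eq_bigr => -[a b].
Qed.

Local Open Scope ring_scope.

Lemma exists_close_of_not_far (R : realType) (eps : R) (n : nat)
    (C : {set word n}) (X : word n) :
  eps < 1 / 8 -> (0 < #|C|)%N -> ~~ far eps X C ->
  [exists c in C, ham X c <= n %/ 8]%N.
Proof.
move=> eps_lt C_gt0 not_far; case: (posnP n) => [n0 | n_gt0].
  have /card_gt0P [c cC] := C_gt0; apply/existsP; exists c; rewrite cC /=.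
  by apply: leq_trans (max_card _) _; rewrite card_ord n0.
apply: contraNT not_far => /existsPn all_far.
have n_pos : (0 : R) < n%:R by rewrite ltr0n.
rewrite /far /distC ltr_pdivlMr //.
apply: (big_ind (fun k : nat => eps * n%:R < k%:R)) => [|a b|c cC]; first by nra.
  by rewrite /minn; case: ifP.
have := all_far c; rewrite cC /= -ltnNge => far_c.
have : (n%:R : R) < 8 * (ham X c)%:R by rewrite -natrM ltr_nat; lia.
nra.
Qed.

(* Raising to the 64th power clears the fractional exponent; 31/32 works
   because 2^9 (3/4)^32 <= (31/32)^64. *)
Lemma near_fraction_le_pow (R : realType) (n m K c : nat) :
  (c%:R : R) <= 2 `^ (n%:R / 64) -> (8 * K <= n)%N -> (n <= 2 * m)%N ->
  2 ^+ K * c%:R * (3 / 4) ^+ m <= (31 / 32 : R) ^+ n.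
Proof.
move=> c_small K_small m_large.
have K64 : (2 : R) ^+ K ^+ 64 <= 2 ^+ (8 * n).
  by rewrite -exprM ler_eXn2l ?ltr1n //; lia.
have c64 : (c%:R : R) ^+ 64 <= 2 ^+ n.
  apply: le_trans (lerXn2r 64 _ _ c_small) _; rewrite ?nnegrE ?powR_ge0 //.
  by rewrite -powR_mulrn ?powR_ge0 // -powRrM mulfVK ?pnatr_eq0 // powR_mulrn.
have m64 : (3 / 4 : R) ^+ m ^+ 64 <= (3 / 4) ^+ (32 * n).
  by rewrite -exprM; apply: ler_wiXn2l; [lra | lra | lia].
have constant : (2 : R) ^+ 9 * (3 / 4) ^+ 32 <= (31 / 32) ^+ 64 by lra.
rewrite -(ler_pXn2r (n := 64)) ?nnegrE ?mulr_ge0 ?exprn_ge0 //; try lra.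
rewrite [X in X <= _]exprMn [X in X * _ <= _]exprMn.
rewrite -[X in _ <= X]exprM mulnC exprM.
apply: le_trans (lerXn2r n _ _ constant); rewrite ?nnegrE; [| lra | lra].
have -> : (2 ^+ 9 * (3 / 4) ^+ 32 : R) ^+ n = 2 ^+ (8 * n) * 2 ^+ n * (3 / 4) ^+ (32 * n).
  by rewrite exprMn -!exprM -exprD; congr (_ ^+ _ * _); lia.
apply: ler_pM; [apply: mulr_ge0 | | apply: ler_pM | exact: m64];
  rewrite ?exprn_ge0 //; lra.
Qed.

Section Sampling.
Variables (R : realType) (eps : R) (n : nat) (C : {set word n}) (J : {set 'I_n}).
Hypotheses (eps_lt : eps < 1 / 8) (C_gt0 : (0 < #|C|)%N).
Hypotheses (C_small : (#|C|%:R : R) <= 2 `^ (n%:R / 64))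
           (J_small : (#|J|%:R : R) <= n%:R / 2).
Local Notation m := #|~: J|.

Lemma card_fiber_not_far_le (c0 : word n) :
  (#|[set X in fiber J c0 | ~~ far eps X C]|%:R : R)
    <= (31 / 32) ^+ n * #|fiber J c0|%:R.
Proof.
have m_large : (n <= 2 * m)%N.
  have : (2 * #|J| <= n)%N by rewrite -(ler_nat R) natrM; move: J_small; lra.
  by have := cardsC J; rewrite card_ord; lia.
have not_far_near : (#|[set X in fiber J c0 | ~~ far eps X C]| * 2 ^ m
                      <= 2 ^ (n %/ 8) * (#|C| * 3 ^ m))%N.
  apply: leq_trans (card_fiber_near J c0 C (n %/ 8)); rewrite leq_mul2r; apply/orP; right.
  apply/subset_leq_card/fintype.subsetP => X; rewrite !inE => /andP[-> not_far] /=.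
  exact: exists_close_of_not_far not_far.
have pow_gt0 : (0 : R) < (2 ^ m)%N%:R by rewrite ltr0n expn_gt0.
rewrite card_fiber -(ler_pM2r pow_gt0).
apply: le_trans (_ : _ <= (2 ^ (n %/ 8) * (#|C| * 3 ^ m))%N%:R) _.
  by rewrite -natrM ler_nat.
have -> : (2 ^ (n %/ 8) * (#|C| * 3 ^ m))%N%:R
          = 2 ^+ (n %/ 8) * #|C|%:R * (3 / 4 : R) ^+ m * (2 ^ m)%N%:R * (2 ^ m)%N%:R.
  rewrite !natrM !natrX expr_div_n (_ : 4 = 2 * 2 :> R) ?exprMn; last by lra.
  by field; rewrite expf_eq0 pnatr_eq0 andbF.
rewrite !ler_pM2r //; apply: near_fraction_le_pow C_small _ m_large; lia.
Qed.

Lemma far_fraction_ge (P : {set word n * word n}) :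
  (0 < #|P|)%N ->
  (forall a b, (a, b) \in P -> [set b' | (a, b') \in P] = fiber J a) ->
  1 - (31 / 32 : R) ^+ n <= #|[set p in P | far eps p.2 C]|%:R / #|P|%:R.
Proof.
move=> P_gt0 sections.
have not_far_le :
    (#|[set p in P | ~~ far eps p.2 C]|%:R : R) <= (31 / 32) ^+ n * #|P|%:R.
  rewrite 2!card_pairs_by_sections !natr_sum mulr_sumr; apply: ler_sum => a _.
  have -> : [set b | (a, b) \in [set p in P | ~~ far eps p.2 C]] =
            [set b in [set b | (a, b) \in P] | ~~ far eps b C].
    by apply/setP => b; rewrite !inE.
  case: (pickP [pred b | (a, b) \in P]) => [b /sections-> | no_b].
    exact: card_fiber_not_far_le.
  rewrite (eq_card0 (A := [set b in _ | _])) => [|b].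
    by rewrite mulr_ge0 ?exprn_ge0 ?divr_ge0.
  by rewrite !inE; move: (no_b b) => /= ->.
have split_far :
    (#|[set p in P | far eps p.2 C]| + #|[set p in P | ~~ far eps p.2 C]|)%N = #|P|.
  rewrite -(cardsID [set p | far eps p.2 C] P).
  by congr addn; apply: eq_card => p; rewrite !inE andbC.
have P_pos : (0 : R) < #|P|%:R by rewrite ltr0n.
have far_frac : #|[set p in P | far eps p.2 C]|%:R / #|P|%:R
                = 1 - #|[set p in P | ~~ far eps p.2 C]|%:R / #|P|%:R :> R.
  by rewrite -split_far natrD in P_pos *; field; exact: lt0r_neq0.
by rewrite far_frac lerD2l lerN2 ler_pdivrMr.
Qed.

End Sampling.

Import numFieldNormedType.Exports.
Local Open Scope classical_set_scope.

Theorem lemma6 (R : realType) (eps : R) :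
  eps < 1 / 8 ->
  exists delta : nat -> R,
    (delta : R^nat) @ \oo --> 0 /\
    forall (n : nat) (C : {set word n}) (J : {set 'I_n}),
      (0 < #|C|)%N ->
      (#|C|%:R : R) <= 2 `^ (n%:R / 64) ->
      (#|J|%:R : R) <= n%:R / 2 ->
      1 - delta n <= UJ_prob R C J (fun x => far eps x C) /\
      forall v : word n,
        (0 < #|[set p in UJ_space C J | agree_on J p.2 v]|)%N ->
        1 - delta n <= UJ_cprob R C J v (fun x => far eps x C).
Proof.
move=> eps_lt; exists (fun n => (31 / 32 : R) ^+ n); split.
  by apply: cvg_expr; rewrite ger0_norm; lra.
move=> n C J C_gt0 C_small J_small.
have far_ge := far_fraction_ge eps_lt C_gt0 C_small J_small.
split => [|v consistent].
- have /card_gt0P [c cC] := C_gt0.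
  apply: far_ge => [|a b].
    by apply/card_gt0P; exists (c, c); rewrite !inE cC; apply/forallP => j; apply/implyP.
  by rewrite !inE => /andP[aC _]; apply/setP => b'; rewrite !inE aC.
- set P := [set p in UJ_space C J | agree_on J p.2 v].
  rewrite /UJ_cprob (eq_card (B := [set p in P | far eps p.2 C])) => [|p].
    apply: far_ge => // a b; rewrite !inE => /andP[/andP[aC ab] bv].
    rewrite (agree_on_eq_trans v ab) in bv.
    apply/setP => b'; rewrite !inE aC /=.
    by case ab': (agree_on J a b'); rewrite //= (agree_on_eq_trans v ab').
  by rewrite !inE andbA andbAC.
Qed.
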